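(* For an ADP problem $\langle\mathcal{P},\mathcal{S}\rangle$ let \[\mathcal{P}'=\mathcal{U}(\mathcal{P})\cup\{\ell\to\mu^{\mathsf{false}}\mid \ell\to\mu^m\in\mathcal{P}\setminus\mathcal{U}(\mathcal{P})\},\qquad \mathcal{S}'=(\mathcal{S}\cap\mathcal{U}(\mathcal{P}))\cup\{\ell\to\mu^{\mathsf{false}}\mid\ell\to\mu^m\in\mathcal{S}\setminus\mathcal{U}(\mathcal{P})\}.\] Then the processor $\mathrm{Proc}_{\mathtt{UR}}(\langle\mathcal{P},\mathcal{S}\rangle)=(\mathrm{Pol}_0,\{\langle\mathcal{P}',\mathcal{S}'\rangle\})$ is sound.
   Context: Annotated dependency pairs (ADPs): over a finite signature $\Sigma$ with fresh annotated copies $f^\sharp$ of symbols, an ADP is $\ell\to\{p_1:r_1,\dots,p_k:r_k\}^m$ with $\ell$ a non-variable unannotated term, $r_j$ possibly annotated with $\mathcal{V}(r_j)\subseteq\mathcal{V}(\ell)$, $0<p_j\le1$, $\sum p_j=1$, flag $m\in\{\mathsf{true},\mathsf{false}\}$; $\operatorname{Supp}(\{p_j:r_j\})$ is the multiset of the $r_j$. For a set $\mathcal{P}$, defined symbols are roots of left-hand sides; basic terms are $f(t_1,\dots,t_k)$ with $f$ defined, $t_i$ free of defined symbols; $|t|$ term size; $\flat$ removes all annotations, $t^\sharp$ annotates the root, $\flat^\uparrow_\pi$ removes annotations strictly above $\pi$; $t\trianglelefteq_\sharp s$ means $t=\flat(s|_\pi)$ for some position $\pi$ of $s$ carrying an annotated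 symbol. Rewriting with $\mathcal{P}$ (innermost): at a position $\pi$ with defined or annotated symbol, ADP $\ell\to\{p_j:r_j\}^m\in\mathcal{P}$, $\sigma$ with $\flat(s|_\pi)=\ell\sigma$ whose proper subterms are normal forms: $t_j=s[r_j\sigma]_\pi$ (at: $m=\mathsf{true}$, $\pi$ annotated), $s[\flat(r_j)\sigma]_\pi$ (nt), $\flat^\uparrow_\pi(s[r_j\sigma]_\pi)$ (af), $\flat^\uparrow_\pi(s[\flat(r_j)\sigma]_\pi)$ (nf). $\mathcal{P}$-chain trees: possibly infinite finitely-branching trees with nodes $(p_v:t_v)$, root probability 1, $t_v$ rewriting to $\{\tfrac{p_w}{p_v}:t_w\}_{w}$ at inner nodes. For $\mathcal{S}\subseteq\mathcal{P}$: $\operatorname{edl}_{\langle\mathcal{P},\mathcal{S}\rangle}(\mathfrak{T})$ sums $p_v$ over inner nodes rewritten by (at)/(af)-steps with ADPs in $\mathcal{S}$; $\operatorname{edh}_{\langle\mathcal{P},\mathcal{S}\rangle}(t)$ = sup over chain trees rooted at $t^\sharp$ ($t$ basic); $\iota_{\langle\mathcal{P},\mathcal{S}\rangle}=\iota(n\mapsto\sup\{\operatorname{edh}_{\langle\mathcal{P},\mathcal{S}\rangle}(t)\mid t\text{ basic},|t|\le n\})$, where complexities $\mathfrak{C}=\{\mathrm{Pol}_0,\mathrm{Pol}_1,\dots,\mathrm{Exp},\mathrm{2\text{-}Exp},\mathrm{Fin},\omega\}$ are ordered in that order, $\oplus$ is maximum, and $\iota(f)=\mathrm{Pol}_a$ for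 least $a$ with $f\in O(n^a)$, else $\mathrm{Exp}$ if $f\in O(2^{\mathrm{pol}(n)})$, else $\mathrm{2\text{-}Exp}$ if $f\in O(2^{2^{\mathrm{pol}(n)}})$, else $\mathrm{Fin}$ if $f$ never equals $\omega$, else $\omega$. Usable rules: $\mathrm{Rules}_{\mathcal{P}}(f)=\{\ell\to\mu^{\mathsf{true}}\in\mathcal{P}\mid\operatorname{root}(\ell)=f\}$. $\mathcal{U}_{\mathcal{P}}(t)=\emptyset$ if $t$ is a variable or $\mathcal{P}=\emptyset$; $\mathcal{U}_{\mathcal{P}}(f(t_1,\dots,t_n))=\mathrm{Rules}_{\mathcal{P}}(f)\cup\bigcup_j\mathcal{U}_{\mathcal{P}'}(t_j)\cup\bigcup_{\ell\to\mu^{\mathsf{true}}\in\mathrm{Rules}_{\mathcal{P}}(f),\,r\in\operatorname{Supp}(\mu)}\mathcal{U}_{\mathcal{P}'}(\flat(r))$ with $\mathcal{P}'=\mathcal{P}\setminus\mathrm{Rules}_{\mathcal{P}}(f)$. $\mathcal{U}(\mathcal{P})=\bigcup_{\ell\to\mu^m\in\mathcal{P},\,r\in\operatorname{Supp}(\mu),\,t\trianglelefteq_\sharp r}\mathcal{U}_{\mathcal{P}}(t^\sharp)$. ADP problems, proof trees, soundness: an ADP problem is $\langle\mathcal{P},\mathcal{S}\rangle$ with $\mathcal{P}$ finite, $\mathcal{S}\subseteq\mathcal{P}$, solved iff $\mathcal{S}=\emptyset$. A processor maps an ADP problem to $(c,\{\langle\mathcal{P}_1,\mathcal{S}_1\rangle,\dots,\langle\mathcal{P}_n,\mathcal{S}_n\rangle\})$,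 $c\in\mathfrak{C}$. A proof tree is a finite tree with node labels $L_{\mathcal{A}}$ (ADP problems) and $L_{\mathcal{C}}$ (complexities) such that each inner node's labels and children arise by a processor application and leaves have $L_{\mathcal{C}}=\mathrm{Pol}_0$ if solved, $\omega$ otherwise. It is well formed if for each node $v$ with $L_{\mathcal{A}}(v)=\langle\mathcal{P},\mathcal{S}\rangle$ and root path $v_1,\dots,v_k=v$: $\iota_{\langle\mathcal{P},\mathcal{S}\rangle}\sqsubseteq L_{\mathcal{C}}(v_1)\oplus\dots\oplus L_{\mathcal{C}}(v_{k-1})\oplus\max\{L'_{\mathcal{C}}(w)\mid w$ reachable from $v$, including $v\}$ and $\iota_{\langle\mathcal{P},\mathcal{P}\setminus\mathcal{S}\rangle}\sqsubseteq L_{\mathcal{C}}(v_1)\oplus\dots\oplus L_{\mathcal{C}}(v_{k-1})$, with $L'_{\mathcal{C}}=L_{\mathcal{C}}$ on inner nodes and $\iota_{L_{\mathcal{A}}(w)}$ on leaves. A processor with $\mathrm{Proc}(\langle\mathcal{P},\mathcal{S}\rangle)=(c,\{\langle\mathcal{P}_i,\mathcal{S}_i\rangle\}_{i\le n})$ is sound if for every well-formed proof tree and node $v$ with $L_{\mathcal{A}}(v)=\langle\mathcal{P},\mathcal{S}\rangle$ and root path $v_1,\dots,v_k=v$: $\iota_{\langle\mathcal{P},\mathcal{S}\rangle}\sqsubseteq L_{\mathcal{C}}(v_1)\oplus\dots\oplus L_{\mathcal{C}}(v_{k-1})\oplus c\oplus\iota_{\langle\mathcal{P}_1,\mathcal{S}_1\rangle}\oplus\dots\oplus\iota_{\langle\mathcal{P}_n,\mathcal{S}_n\rangle}$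 and $\iota_{\langle\mathcal{P}_i,\mathcal{P}_i\setminus\mathcal{S}_i\rangle}\sqsubseteq L_{\mathcal{C}}(v_1)\oplus\dots\oplus L_{\mathcal{C}}(v_{k-1})\oplus c$ for all $i$. *)

From HB Require Import structures.
From mathcomp Require Import all_boot all_order all_algebra.
From mathcomp Require Import all_classical all_reals all_analysis.
From mathcomp Require Import Rstruct Rstruct_topology.
From Stdlib Require Rdefinitions.
Notation R := Rdefinitions.R.

Set Implicit Arguments.
Unset Strict Implicit.
Unset Printing Implicit Defensive.
Import Order.TTheory GRing.Theory Num.Theory.
Local Open Scope classical_set_scope.
Local Open Scope ring_scope.

Inductive cplx := Pol of nat | CExp | CExp2 | CFin | COmega.

Definition cplx_rank (c : cplx) : nat * nat :=
  match c with
  | Pol a => (0%N, a) | CExp => (1%N, 0%N) | CExp2 => (2%N, 0%N)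
  | CFin => (3%N, 0%N) | COmega => (4%N, 0%N) end.

Definition leC (c d : cplx) : Prop :=
  ((cplx_rank c).1 < (cplx_rank d).1)%N \/
  ((cplx_rank c).1 = (cplx_rank d).1 /\ ((cplx_rank c).2 <= (cplx_rank d).2)%N).

Definition maxC (c d : cplx) : cplx :=
  match c, d with
  | Pol a, Pol b => Pol (maxn a b)
  | Pol _, d => d
  | c, Pol _ => c
  | CExp, d => d
  | c, CExp => c
  | CExp2, d => d
  | c, CExp2 => c
  | CFin, d => d
  | COmega, _ => COmega
  end.

Definition bigO (f : nat -> \bar R) (g : nat -> R) : Prop :=
  exists c : R, exists N : nat, forall n : nat, (N <= n)%N -> (f n <= (c * g n)%:E)%E.

Lemma ex_asbool_pol (f : nat -> \bar R) :
  (exists a : nat, bigO f (fun n => (n%:R) ^+ a)) ->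
  exists a : nat, `[< bigO f (fun n => (n%:R) ^+ a) >].
Proof. by case=> a Ha; exists a; apply/asboolP. Qed.

Definition iota_c (f : nat -> \bar R) : cplx :=
  match pselect (exists a : nat, bigO f (fun n => (n%:R) ^+ a)) with
  | left H => Pol (ex_minn (ex_asbool_pol H))
  | right _ =>
    if `[< exists k : nat, bigO f (fun n => 2 ^+ (n ^ k)) >] then CExp
    else if `[< exists k : nat, bigO f (fun n => 2 ^+ (2 ^ (n ^ k))) >] then CExp2
    else if `[< forall n, f n != +oo%E >] then CFin
    else COmega
  end.

Section ADP.
Variable F : finType.
Variable ar : F -> nat.

(* [Fn f b ts] is f(ts) if b = false, and the annotated f^#(ts) if b = true;
   variables are natural numbers. *)
Inductive term := Var of nat | Fn of F & bool & seq term.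

Fixpoint wf_term (t : term) : bool :=
  match t with
  | Var _ => true
  | Fn f _ ts => (size ts == ar f) && all wf_term ts
  end.

Fixpoint flat (t : term) : term :=
  match t with Var x => Var x | Fn f _ ts => Fn f false (map flat ts) end.

Definition sharp (t : term) : term :=
  match t with Var x => Var x | Fn f _ ts => Fn f true ts end.

Fixpoint tsize (t : term) : nat :=
  match t with Var _ => 1%N | Fn f _ ts => (sumn (map tsize ts)).+1 end.

Fixpoint tvars (t : term) : seq nat :=
  match t with Var x => [:: x] | Fn f _ ts => flatten (map tvars ts) end.

Fixpoint subst (sigma : nat -> term) (t : term) : term :=
  match t with Var x => sigma x | Fn f b ts => Fn f b (map (subst sigma) ts) end.

Fixpoint has_annot (t : term) : bool :=
  match t with Var _ => false | Fn f b ts => b || has has_annot ts end.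

(* subterm at a position (positions are sequences of 0-based argument indices) *)
Fixpoint subterm_at (t : term) (pi : seq nat) : option term :=
  match pi with
  | [::] => Some t
  | i :: pi' => match t with
                | Var _ => None
                | Fn f b ts => if (i < size ts)%N then subterm_at (nth t ts i) pi' else None
                end
  end.

Fixpoint replace (t : term) (pi : seq nat) (u : term) : term :=
  match pi with
  | [::] => u
  | i :: pi' => match t with
                | Var x => Var x
                | Fn f b ts =>
                    Fn f b [seq (if j == i then replace tj pi' u else tj)
                           | '(j, tj) <- zip (iota 0 (size ts)) ts]
                end
  end.

Fixpoint unmark_above (t : term) (pi : seq nat) : term :=
  match pi with
  | [::] => t
  | i :: pi' => match t with
                | Var x => Var x
                | Fn f _ ts =>
                    Fn f false [seq (if j == i then unmark_above tj pi' else tj)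
                               | '(j, tj) <- zip (iota 0 (size ts)) ts]
                end
  end.

Definition annot_at (t : term) (pi : seq nat) : bool :=
  match subterm_at t pi with Some (Fn _ true _) => true | _ => false end.

Definition root (t : term) : option (F * bool) :=
  match t with Var _ => None | Fn f b _ => Some (f, b) end.

Record adp := ADP { lhs : term; rhs : seq (R * term); flag : bool }.

Definition adp_wf (a : adp) : Prop :=
  [/\ (exists f ts, lhs a = Fn f false ts),
      ~~ has_annot (lhs a), wf_term (lhs a),
      (forall p r, List.In (p, r) (rhs a) ->
         [/\ 0 < p, p <= 1, wf_term r & {subset tvars r <= tvars (lhs a)}])
    & \sum_(pr <- rhs a) pr.1 = 1].

Definition setflag (a : adp) (m : bool) : adp := ADP (lhs a) (rhs a) m.

Definition problem := (set adp * set adp)%type.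

Definition problem_ok (A : problem) : Prop :=
  [/\ finite_set A.1, A.2 `<=` A.1 & forall a, A.1 a -> adp_wf a].

Definition defined (P : set adp) (f : F) : Prop :=
  exists a, P a /\ exists b ts, lhs a = Fn f b ts.

Fixpoint no_defined (P : set adp) (t : term) : Prop :=
  match t with
  | Var _ => True
  | Fn f _ ts => ~ defined P f /\ foldr (fun u acc => no_defined P u /\ acc) True ts
  end.

Definition basic (P : set adp) (t : term) : Prop :=
  wf_term t /\ ~~ has_annot t /\
  exists f ts, t = Fn f false ts /\ defined P f /\ forall u, List.In u ts -> no_defined P u.

Definition NF (P : set adp) (u : term) : Prop :=
  forall pi v, subterm_at u pi = Some v ->
    ~ exists a sigma, P a /\ flat v = subst sigma (lhs a).

Record step := Step { st_pos : seq nat; st_adp : adp; st_sub : nat -> term }.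

Definition step_ok (P : set adp) (s : term) (st : step) : Prop :=
  P (st_adp st) /\
  exists v, subterm_at s (st_pos st) = Some v /\
    flat v = subst (st_sub st) (lhs (st_adp st)) /\
    (forall pi w, pi != [::] ->
       subterm_at (subst (st_sub st) (lhs (st_adp st))) pi = Some w -> NF P w).

Definition step_term (s : term) (st : step) (r : term) : term :=
  let pi := st_pos st in
  let r' := if annot_at s pi then r else flat r in
  let t := replace s pi (subst (st_sub st) r') in
  if flag (st_adp st) then t else unmark_above t pi.

Definition step_result (s : term) (st : step) : seq (R * term) :=
  [seq (pr.1, step_term s st pr.2) | pr <- rhs (st_adp st)].

(* P-chain trees; nodes are addressed by sequences of child indices   *)
Record ctree := CTree {
  ct_node : set (seq nat);
  ct_prob : seq nat -> R;
  ct_lab  : seq nat -> term;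
  ct_step : seq nat -> option step  (* None: leaf; Some st: inner node rewritten by st *)
}.

Definition chain_tree (P : set adp) (T : ctree) : Prop :=
  [/\ ct_node T [::], ct_prob T [::] = 1,
      (forall v i, ct_node T (rcons v i) -> ct_node T v)
    & forall v, ct_node T v ->
       match ct_step T v with
       | None => forall i, ~ ct_node T (rcons v i)
       | Some st =>
           step_ok P (ct_lab T v) st /\
           let res := step_result (ct_lab T v) st in
           (forall i, ct_node T (rcons v i) <-> (i < size res)%N) /\
           (forall i, (i < size res)%N ->
              ct_prob T (rcons v i) = ct_prob T v * (nth (0, ct_lab T v) res i).1 /\
              ct_lab T (rcons v i) = (nth (0, ct_lab T v) res i).2)
       end].

(* inner nodes rewritten by an (at)- or (af)-step with an ADP of S *)
Definition counted (S : set adp) (T : ctree) : set (seq nat) :=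
  [set v | ct_node T v /\ exists st, ct_step T v = Some st /\
           S (st_adp st) /\ annot_at (ct_lab T v) (st_pos st)].

Definition edl (S : set adp) (T : ctree) : \bar R :=
  (\esum_(v in counted S T) (ct_prob T v)%:E)%E.

Definition edh (P S : set adp) (t : term) : \bar R :=
  ereal_sup [set edl S T | T in [set T | chain_tree P T /\ ct_lab T [::] = sharp t]].

Definition iotaPS (P S : set adp) : cplx :=
  iota_c (fun n => ereal_sup [set edh P S t | t in [set t | basic P t /\ (tsize t <= n)%N]]).

Definition iotaP (A : problem) : cplx := iotaPS A.1 A.2.

Definition Rules (P : set adp) (g : F * bool) : set adp :=
  [set a | P a /\ flag a = true /\ root (lhs a) = Some g].

Inductive inU : set adp -> term -> adp -> Prop :=
| inU_rules P f b ts a : Rules P (f, b) a -> inU P (Fn f b ts) a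
| inU_arg P f b ts u a : List.In u ts -> inU (P `\` Rules P (f, b)) u a -> inU P (Fn f b ts) a
| inU_rhs P f b ts rho p r a : Rules P (f, b) rho -> List.In (p, r) (rhs rho) ->
    inU (P `\` Rules P (f, b)) (flat r) a -> inU P (Fn f b ts) a.

Definition UR (P : set adp) : set adp :=
  [set a | exists rho p r pi f ts, P rho /\ List.In (p, r) (rhs rho) /\
      subterm_at r pi = Some (Fn f true ts) /\ inU P (sharp (flat (Fn f true ts))) a].

Definition ProcUR (A : problem) : cplx * seq problem :=
  let P := A.1 in let S := A.2 in
  let P' := UR P `|` [set setflag a false | a in P `\` UR P] in
  let S' := (S `&` UR P) `|` [set setflag a false | a in S `\` UR P] in
  (Pol 0, [:: (P', S')]).

Inductive ptree := PNode of problem & cplx & seq ptree.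

Fixpoint maxL' (T : ptree) : cplx :=
  match T with
  | PNode A C ch =>
      if ch is [::] then iotaP A else foldr (fun c acc => maxC (maxL' c) acc) C ch
  end.

(* labels are ADP problems; leaves are labelled Pol_0 if solved, omega otherwise.
   (The requirement that inner nodes arise from "some processor" is vacuous.) *)
Fixpoint proof_tree (T : ptree) : Prop :=
  match T with
  | PNode A C ch =>
      problem_ok A /\
      (ch = [::] -> (A.2 = set0 -> C = Pol 0) /\ (A.2 <> set0 -> C = COmega)) /\
      foldr (fun c acc => proof_tree c /\ acc) True ch
  end.

(* [pre] = L_C(v_1) ⊕ ... ⊕ L_C(v_{k-1}) for the current node v_k *)
Fixpoint well_formed_from (pre : cplx) (T : ptree) : Prop :=
  match T with
  | PNode A C ch =>
      leC (iotaP A) (maxC pre (maxL' T)) /\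
      leC (iotaPS A.1 (A.1 `\` A.2)) pre /\
      foldr (fun c acc => well_formed_from (maxC pre C) c /\ acc) True ch
  end.

Definition well_formed (T : ptree) : Prop := well_formed_from (Pol 0) T.

(* occurs pre T A : some node of T is labelled A, with the ⊕ of the
   complexities on its root path (excluding itself) equal to pre *)
Inductive occurs : cplx -> ptree -> cplx -> problem -> Prop :=
| occ_here pre A C ch : occurs pre (PNode A C ch) pre A
| occ_child pre A C ch c pre' B :
    List.In c ch -> occurs (maxC pre C) c pre' B -> occurs pre (PNode A C ch) pre' B.

Definition sound (Proc : problem -> cplx * seq problem) : Prop :=
  forall (T : ptree) (pre : cplx) (A : problem),
    proof_tree T -> well_formed T -> occurs (Pol 0) T pre A ->
    leC (iotaP A) (maxC (maxC pre (Proc A).1) (foldr maxC (Pol 0) (map iotaP (Proc A).2))) /\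
    (forall B, List.In B (Proc A).2 -> leC (iotaPS B.1 (B.1 `\` B.2)) (maxC pre (Proc A).1)).

End ADP.

(* Along a chain tree that starts from an annotated basic term, every subterm lying
   strictly below an annotation is either a normal form or has a root all of whose
   rules are usable.  This holds initially because the arguments of a basic term are
   normal forms, and it is preserved because U(P) is closed under the symbols that
   right-hand sides place below annotations or that usable rules introduce.  Hence a
   non-usable rule is never applied below an annotation, so the flattening of
   (af)/(nf)-steps changes nothing for it and its flag is irrelevant.  Dropping, and
   conversely restoring, these flags maps P-chain trees to P'-chain trees and back
   with the same labels and probabilities, sending S-steps to S'-steps and
   (P' \ S')-steps to (P \ S)-steps.  This yields iota<P,S> <= iota<P',S'> and
   iota<P',P'\S'> <= iota<P,P\S>, which is all that soundness asks of a processor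
   returning Pol_0. *)

From Pilot Require Import Defs.
From mathcomp Require Import all_boot all_order all_algebra.
From mathcomp Require Import all_classical all_reals all_analysis.
From mathcomp Require Import Rstruct Rstruct_topology.
From mathcomp Require Import zify.
Set Implicit Arguments. Unset Strict Implicit. Unset Printing Implicit Defensive.
Import Order.TTheory GRing.Theory Num.Theory.
Local Open Scope classical_set_scope.

Section ListIn.
Variables A B : Type.

Lemma foldr_andP (Q : A -> Prop) (s : seq A) :
  foldr (fun u acc => Q u /\ acc) True s <-> (forall u, List.In u s -> Q u).
Proof.
elim: s => [|u s IH] /=; first by split.
split; first by move=> [Hu /IH H] v [<-|/H].
by move=> H; split; [apply: H; left | apply/IH => v Hv; apply: H; right].
Qed.

Lemma In_nth_index (u : A) (s : seq A) :
  List.In u s -> exists2 j, (j < size s)%N & forall d, nth d s j = u.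
Proof.
elim: s => [|x s IH] //= [<-|/IH [j Hj Hn]]; first by exists 0%N.
by exists j.+1.
Qed.

Lemma nth_In (s : seq A) j d : (j < size s)%N -> List.In (nth d s j) s.
Proof. by elim: s j => [|x s IH] [|j] //= Hj; [left | right; apply: IH]. Qed.

Lemma In_map (f : A -> B) (s : seq A) x : List.In x s -> List.In (f x) (map f s).
Proof. by elim: s => [|y s IH] //= [->|/IH]; [left|right]. Qed.

Lemma In_map_inv (f : A -> B) (s : seq A) u :
  List.In u (map f s) -> exists2 x, List.In x s & u = f x.
Proof.
elim: s => [|x s IH] //= [<-|/IH [y Hy ->]]; first by exists x => //; left.
by exists y => //; right.
Qed.

Lemma eq_map_In (f g : A -> B) (s : seq A) :
  (forall x, List.In x s -> f x = g x) -> map f s = map g s.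
Proof.
elim: s => [|x s IH] //= H; rewrite H; last by left.
by rewrite IH // => y Hy; apply: H; right.
Qed.

Lemma mem_flatten_map (C : eqType) (f : A -> seq C) (s : seq A) x :
  x \in flatten (map f s) <-> exists2 u, List.In u s & x \in f u.
Proof.
elim: s => [|y s IH] /=; first by split=> // -[].
rewrite mem_cat; split.
  case/orP => [Hx|/IH [u Hu Hx]]; first by exists y => //; left.
  by exists u => //; right.
by move=> [u [<-|Hu] Hx]; apply/orP; [left | right; apply/IH; exists u].
Qed.

End ListIn.

Section MapAt.
Variable A : Type.
Implicit Types (G : A -> A) (s : seq A).

Definition map_at (k i : nat) G s : seq A :=
  [seq (if j == i then G x else x) | '(j, x) <- zip (iota k (size s)) s].

Lemma map_at_cons k i G x s :
  map_at k i G (x :: s) = (if k == i then G x else x) :: map_at k.+1 i G s.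
Proof. by []. Qed.

Lemma map_at_id k i G s : (i < k)%N -> map_at k i G s = s.
Proof.
elim: s k => [|x s IH] k // Hik; rewrite map_at_cons IH; last lia.
by case: eqP => // E; lia.
Qed.

Lemma map_at_comp k i G1 G2 s : map_at k i G2 (map_at k i G1 s) = map_at k i (G2 \o G1) s.
Proof. by elim: s k => [|x s IH] k //; rewrite !map_at_cons IH; case: eqP. Qed.

Lemma In_map_at k i G s u d :
  List.In u (map_at k i G s) -> List.In u s \/ (k <= i)%N /\ u = G (nth d s (i - k)).
Proof.
elim: s k => [|x s IH] k //; rewrite map_at_cons /=.
case: eqP => [Eki|Hne] [Hu|Hu]; first by right; rewrite Eki subnn.
- by case: (IH _ Hu) => [H|[H _]]; [left; right | lia].
- by left; left.
- case: (IH _ Hu) => [H|[H ->]]; first by left; right.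
  by right; split; [lia | have -> : (i - k = (i - k.+1).+1)%N by lia].
Qed.

Lemma eq_map_at i G1 G2 s d :
  G1 (nth d s i) = G2 (nth d s i) -> map_at 0 i G1 s = map_at 0 i G2 s.
Proof.
rewrite -[i in nth _ _ i]subn0; elim: s 0%N => [|x s IH] k // E.
rewrite !map_at_cons; case: (ltngtP i k) => [lt_ik|lt_ki|Eik].
- by rewrite !map_at_id //; lia.
- rewrite (IH k.+1) //.
  by move: E; have -> : (i - k = (i - k.+1).+1)%N by lia.
- by move: E; rewrite Eik subnn /= => ->; rewrite !map_at_id.
Qed.

End MapAt.

Section Terms.
Variable F : finType.
Local Notation term := (Defs.term F).
Implicit Types (P Q : set (adp F)) (s t u v w r : term).

Definition term_nested_ind (Q : term -> Prop) (HV : forall x, Q (Var F x))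
  (HF : forall f b ts, (forall u, List.In u ts -> Q u) -> Q (Fn f b ts)) : forall t, Q t :=
  fix rec (t : term) : Q t :=
  match t with
  | Var x => HV x
  | Fn f b ts => HF f b ts ((fix aux (l : seq term) : forall u, List.In u l -> Q u :=
       match l with
       | [::] => fun u (H : List.In u [::]) => False_ind _ H
       | v :: l' => fun u H => match H with
                               | or_introl e => eq_ind v Q (rec v) u e
                               | or_intror H' => aux l' u H' end
       end) ts)
  end.

Fixpoint syms t : seq F :=
  match t with Var _ => [::] | Fn g _ us => g :: flatten (map syms us) end.

Lemma syms_flat t : syms (flat t) = syms t.
Proof.
elim/term_nested_ind: t => [x|f b ts IH] //=; congr (_ :: flatten _).
by rewrite -map_comp; apply: eq_map_In.
Qed.

Lemma tvars_flat t : tvars (flat t) = tvars t.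
Proof.
elim/term_nested_ind: t => [x|f b ts IH] //=; congr (flatten _).
by rewrite -map_comp; apply: eq_map_In.
Qed.

Lemma subterm_at_cat s v p q :
  subterm_at s p = Some v -> subterm_at s (p ++ q) = subterm_at v q.
Proof.
elim: p s => [|i p IH] s /=; first by case=> ->.
by case: s => // f b ts; case: ifP => // _; apply: IH.
Qed.

Lemma subterm_at_In f b ts u :
  List.In u ts -> exists j, subterm_at (Fn f b ts) [:: j] = Some u.
Proof. by move=> Hu; have [j Hj Hn] := In_nth_index Hu; exists j; rewrite /= Hj Hn. Qed.

Lemma subterm_at_var t x : x \in tvars t -> exists pi, subterm_at t pi = Some (Var F x).
Proof.
elim/term_nested_ind: t => [y|g b us IH] /=; first by rewrite inE => /eqP ->; exists [::].
move/mem_flatten_map => [u Hu /(IH u Hu) [pi Hpi]].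
have [j Hj] := subterm_at_In g b Hu.
by exists (j :: pi); rewrite -cat1s (subterm_at_cat _ Hj).
Qed.

Lemma subterm_at_subst (sg : nat -> term) pi t w :
  subterm_at t pi = Some w -> subterm_at (subst sg t) pi = Some (subst sg w).
Proof.
elim: pi t => [|i pi IH] t /=; first by case=> ->.
case: t => // g b us /=; rewrite size_map; case: ifP => // Hi Hp.
by rewrite (nth_map (Fn g b us)) //; apply: IH.
Qed.

Lemma NF_subterm P s v p : NF P s -> subterm_at s p = Some v -> NF P v.
Proof. by move=> H Hp pi w Hw; apply: (H (p ++ pi) w); rewrite (subterm_at_cat _ Hp). Qed.

Definition lhs_sub P Q := forall a, P a -> exists2 a', Q a' & lhs a' = lhs a.

Lemma NF_lhs_sub P Q u : lhs_sub P Q -> NF Q u -> NF P u.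
Proof.
move=> PQ HN pi w Hw [a [sg [Pa Ha]]]; have [a' Qa' Ea'] := PQ a Pa.
by apply: (HN pi w Hw); exists a', sg; rewrite Ea'.
Qed.

Lemma defined_lhs_sub P Q f : lhs_sub P Q -> defined P f -> defined Q f.
Proof.
move=> PQ [a [Pa [b [ts E]]]]; have [a' Qa' Ea'] := PQ a Pa.
by exists a'; split => //; exists b, ts; rewrite Ea'.
Qed.

Lemma no_defined_lhs_sub P Q u : lhs_sub Q P -> no_defined P u -> no_defined Q u.
Proof.
move=> QP; elim/term_nested_ind: u => [x|g b us IH] //= [Hd /foldr_andP Hus].
split; first by move/(defined_lhs_sub QP).
by apply/foldr_andP => u Hu; apply: IH (Hus u Hu).
Qed.

Lemma basic_lhs_sub (ar : F -> nat) P Q t :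
  lhs_sub P Q -> lhs_sub Q P -> basic ar P t -> basic ar Q t.
Proof.
move=> PQ QP [Hwf [Hann [f [ts [Et [Hd Hts]]]]]]; split=> //; split=> //.
exists f, ts; split=> //; split; first exact: defined_lhs_sub Hd.
by move=> u /Hts; apply: no_defined_lhs_sub.
Qed.

Lemma no_defined_subterm P u pi w : no_defined P u -> subterm_at u pi = Some w -> no_defined P w.
Proof.
elim: pi u => [|i pi IH] u /=; first by move=> H [<-].
case: u => // g b us [_ /foldr_andP Hus]; case: ifP => // Hi; apply: IH.
exact: Hus (nth_In _ Hi).
Qed.

Lemma subst_var_NF P sg g b ts x :
  (forall pi w, pi != [::] -> subterm_at (subst sg (Fn g b ts)) pi = Some w -> NF P w) ->
  x \in tvars (Fn g b ts) -> NF P (sg x).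
Proof.
move=> Hinner /subterm_at_var [[|i pi] Hpi] //.
by apply: (Hinner (i :: pi)) => //; apply: (subterm_at_subst sg Hpi).
Qed.

Lemma setflagK (a : adp F) : setflag a (flag a) = a.
Proof. by case: a. Qed.

Lemma setflag_setflag (a : adp F) m m' : setflag (setflag a m) m' = setflag a m'.
Proof. by []. Qed.

Lemma lhs_sub_refl P : lhs_sub P P.
Proof. by move=> a Pa; exists a. Qed.

Definition sub_unflagged Q P := forall b, Q b -> P b \/ flag b = false /\ P (setflag b true).

Lemma sub_unflagged_refl P : sub_unflagged P P.
Proof. by move=> b; left. Qed.

Lemma sub_unflagged_origin Q P (b : adp F) : sub_unflagged Q P -> Q b ->
  exists2 a, P a & [/\ lhs a = lhs b, rhs a = rhs b & (flag b -> a = b)].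
Proof.
move=> QP /QP [Pb|[Eb Pb]]; first by exists b.
by exists (setflag b true); rewrite // Eb.
Qed.

Lemma sub_unflagged_lhs_sub Q P : sub_unflagged Q P -> lhs_sub Q P.
Proof. by move=> QP b /(sub_unflagged_origin QP) [a Pa [El _ _]]; exists a. Qed.

Lemma replace_Fn f b (ts : seq term) i p w :
  replace (Fn f b ts) (i :: p) w = Fn f b (map_at 0 i (fun tj => replace tj p w) ts).
Proof. by []. Qed.

Lemma unmark_above_Fn f b (ts : seq term) i p :
  unmark_above (Fn f b ts) (i :: p) = Fn f false (map_at 0 i (fun tj => unmark_above tj p) ts).
Proof. by []. Qed.

End Terms.

Section UsableRules.
Variable F : finType.
Local Notation term := (Defs.term F).
Implicit Types (P : set (adp F)) (t r : term).

Lemma Rules_setD P P0 g a : Rules P g a -> ~ P0 a -> Rules (P `\` P0) g a.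
Proof. by move=> [Pa Ha] nP0; split=> //; split. Qed.

Lemma Rules_root P g g' a : Rules P g a -> Rules P g' a -> g = g'.
Proof. by move=> [_ [_ E1]] [_ [_]]; rewrite E1 => -[]. Qed.

Lemma inU_subset P t a : inU P t a -> P a.
Proof. by elim=> {P t a} [????? []|?????? _ _ []|???????? _ _ _ []]. Qed.

Lemma inU_flag P t a : inU P t a -> flag a = true.
Proof. by elim=> {P t a} // ???? a [_ []]. Qed.

Lemma inU_flat_syms t : forall P g, g \in syms t -> Rules P (g, false) `<=` inU P (flat t).
Proof.
elim/term_nested_ind: t => [x|h b us IH] P g //=.
rewrite inE => /orP [/eqP ->|/mem_flatten_map [u Hu Hg]] a Ha; first exact: inU_rules.
case: (pselect (g = h)) => [Egh|Egh]; first by rewrite Egh in Ha; apply: inU_rules.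
apply: (inU_arg (u := flat u)); first exact: In_map.
by apply: (IH u Hu _ g Hg); apply: Rules_setD => // /(Rules_root Ha) [/Egh].
Qed.

Lemma inU_rhs_syms P t a : inU P t a -> forall p r, List.In (p, r) (rhs a) ->
  forall h, h \in syms r -> Rules P (h, false) `<=` inU P t.
Proof.
elim=> {P t a} [P f b ts a Ha|P f b ts u a Hu _ IH|P f b ts rho p r a Hrho Hpr _ IH]
  p' r' Hr h Hh c Hc; (case: (pselect (Rules P (f, b) c)) => Hcf; first exact: inU_rules).
- by apply: (@inU_rhs F P f b ts a p' r') => //; apply: inU_flat_syms Hh _ _; apply: Rules_setD.
- by apply: (inU_arg (u := u)) => //; apply: (IH p' r' Hr h Hh); apply: Rules_setD.
- by apply: (@inU_rhs F P f b ts rho p r) => //; apply: (IH p' r' Hr h Hh); apply: Rules_setD.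
Qed.

Lemma UR_subset P : UR P `<=` P.
Proof. by move=> a [? [? [? [? [? [? [_ [_ [_ /inU_subset]]]]]]]]]. Qed.

Lemma UR_flag P a : UR P a -> flag a = true.
Proof. by move=> [? [? [? [? [? [? [_ [_ [_ /inU_flag]]]]]]]]]. Qed.

Definition usable_root P g := Rules P (g, false) `<=` UR P.

Lemma usable_root_annotated P rho p r pi f us u g :
  P rho -> List.In (p, r) (rhs rho) -> subterm_at r pi = Some (Fn f true us) ->
  List.In u us -> g \in syms u -> usable_root P g.
Proof.
move=> Prho Hr Hpi Hu Hg a Ha; exists rho, p, r, pi, f, us; do 3 split => //.
apply: (inU_arg (u := flat u)); first exact: In_map.
by apply: inU_flat_syms Hg _ _; apply: Rules_setD => // /(Rules_root Ha).
Qed.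

Lemma usable_root_UR_rhs P rho p r h :
  UR P rho -> List.In (p, r) (rhs rho) -> h \in syms r -> usable_root P h.
Proof.
move=> [rho0 [p0 [r0 [pi [f [ts [H1 [H2 [H3 H4]]]]]]]]] Hr Hh c Hc.
by exists rho0, p0, r0, pi, f, ts; do 3 split => //; apply: (inU_rhs_syms H4 Hr Hh Hc).
Qed.

End UsableRules.

Section BelowAnnotations.
Variable F : finType.
Local Notation term := (Defs.term F).
Implicit Types (P : set (adp F)) (s t u v w r : term).

(* [ab] records whether some strict ancestor of [t] is annotated. *)
Fixpoint below_annot (Q : term -> Prop) (ab : bool) t : Prop :=
  match t with
  | Var _ => True
  | Fn g b us => (ab -> Q t) /\ foldr (fun u acc => below_annot Q (ab || b) u /\ acc) True us
  end.

Lemma below_annot_mono Q (ab ab' : bool) t :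
  below_annot Q ab t -> (ab' -> ab) -> below_annot Q ab' t.
Proof.
elim/term_nested_ind: t ab ab' => [x|g b us IH] ab ab' //= [Hr /foldr_andP Hus] Hab.
split; first by move/Hab/Hr.
apply/foldr_andP => u Hu; apply: IH (Hus u Hu) _ => //.
by case/orP => [/Hab ->|->] //; rewrite orbT.
Qed.

Lemma below_annot_flat Q t : below_annot Q false (flat t).
Proof.
elim/term_nested_ind: t => [x|g b us IH] //=; split => //.
by apply/foldr_andP => u Hu; have [u0 Hu0 ->] := In_map_inv Hu; apply: IH.
Qed.

Lemma below_annot_all Q ab t :
  (forall pi u, subterm_at t pi = Some u -> Q u) -> below_annot Q ab t.
Proof.
elim/term_nested_ind: t ab => [x|g b us IH] ab //= HQ; split; first by move=> _; apply: (HQ [::]).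
apply/foldr_andP => u Hu; apply: IH => // pi w Hw; have [j Hj] := subterm_at_In g b Hu.
by apply: (HQ (j :: pi)); rewrite -cat1s (subterm_at_cat _ Hj).
Qed.

Lemma unmark_above_replace_id Q p : forall s ab g b vs w,
  below_annot Q ab s -> subterm_at s p = Some (Fn g b vs) -> ~ Q (Fn g b vs) ->
  ab = false /\ unmark_above (replace s p w) p = replace s p w.
Proof.
elim: p => [|i p IH] s ab g b vs w.
  by move=> Hs [Es] nQ; split=> //; case: ab Hs => //; rewrite Es => -[/(_ isT)].
case: s => // f c us [_ /foldr_andP Hus] Hsub nQ; rewrite /= in Hsub.
move: Hsub; case: ifP => // Hi Hp.
have [/norP [/negbTE -> /negbTE Ec] Eu] := IH _ _ _ _ _ w (Hus _ (nth_In _ Hi)) Hp nQ.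
split => //; rewrite replace_Fn unmark_above_Fn map_at_comp Ec; congr Fn.
exact: (eq_map_at (d := Fn f c us)).
Qed.

Definition usable_head P t := if t is Fn g _ _ then usable_root P g else True.

Definition NF_or_usable P t := NF P t \/ usable_head P t.

Lemma below_annot_NF P ab t : NF P t -> below_annot (NF_or_usable P) ab t.
Proof. by move=> HN; apply: below_annot_all => pi u Hu; left; apply: NF_subterm HN Hu. Qed.

Lemma below_annot_syms P ab t :
  (forall g, g \in syms t -> usable_root P g) -> below_annot (usable_head P) ab t.
Proof.
elim/term_nested_ind: t ab => [x|g b us IH] ab //= H; split.
  by move=> _; apply: H; rewrite inE eqxx.
apply/foldr_andP => u Hu; apply: IH => // h Hh; apply: H.
by rewrite inE; apply/orP; right; apply/mem_flatten_map; exists u.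
Qed.

Lemma below_annot_rhs P rho p r : P rho -> List.In (p, r) (rhs rho) ->
  forall r0 pi, subterm_at r pi = Some r0 -> below_annot (usable_head P) false r0.
Proof.
move=> Prho Hr r0; elim/term_nested_ind: r0 => [x|h b us IH] pi //= Hpi; split => //.
apply/foldr_andP => u Hu; case: b Hpi => Hpi /=.
  apply: below_annot_syms => g; exact: usable_root_annotated Prho Hr Hpi Hu.
have [j Hj] := subterm_at_In h false Hu.
by apply: (IH u Hu (pi ++ [:: j])); rewrite (subterm_at_cat _ Hpi).
Qed.

Lemma below_annot_subst P (sg : nat -> term) ab r :
  below_annot (usable_head P) ab r -> (forall x, x \in tvars r -> NF P (sg x)) ->
  below_annot (NF_or_usable P) ab (subst sg r).
Proof.
elim/term_nested_ind: r ab => [x|g b us IH] ab /=.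
  by move=> _ H; apply: below_annot_NF; apply: H; rewrite inE.
move=> [Hr /foldr_andP Hus] Hv; split; first by move/Hr; right.
apply/foldr_andP => u Hu; have [u0 Hu0 ->] := In_map_inv Hu.
apply: IH (Hus u0 Hu0) _ => // x Hx.
by apply: Hv; apply/mem_flatten_map; exists u0.
Qed.

Section Replace.
Variable P : set (adp F).
Local Notation inv := (below_annot (NF_or_usable P)).

Lemma below_annot_replace p : forall s ab v w, inv ab s -> subterm_at s p = Some v ->
  ~ NF P v -> (forall c, inv c v -> inv c w) -> inv ab (replace s p w).
Proof.
elim: p => [|i p IH] s ab v w; first by move=> Hs [<-] _; apply.
case: s => // g b us [Hr /foldr_andP Hus] Hsub nNF Hw.
have Hp := Hsub; rewrite /= in Hp; move: Hp; case: ifP => // Hi Hp.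
rewrite replace_Fn /=; split.
  by move/Hr => [HN|]; [case: nNF; apply: NF_subterm HN Hsub | right].
apply/foldr_andP => u /(In_map_at (Fn g b us)) [/Hus //|[_ ->]].
by rewrite subn0; apply: IH (Hus _ (nth_In _ Hi)) Hp nNF Hw.
Qed.

Lemma below_annot_unmark_replace p : forall s ab v w, inv ab s -> subterm_at s p = Some v ->
  ~ NF P v -> inv ab w -> inv ab (unmark_above (replace s p w) p).
Proof.
elim: p => [|i p IH] s ab v w; first by move=> Hs [<-].
case: s => // g b us [Hr /foldr_andP Hus] Hsub nNF Hw.
have Hp := Hsub; rewrite /= in Hp; move: Hp; case: ifP => // Hi Hp.
rewrite replace_Fn unmark_above_Fn map_at_comp /= orbF; split.
  by move/Hr => [HN|]; [case: nNF; apply: NF_subterm HN Hsub | right].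
have Hus' u : List.In u us -> inv ab u.
  by move=> Hu; apply: below_annot_mono (Hus u Hu) _ => ->.
apply/foldr_andP => u /(In_map_at (Fn g b us)) [/Hus' //|[_ ->]].
by rewrite subn0; apply: IH (Hus' _ (nth_In _ Hi)) Hp nNF Hw.
Qed.

End Replace.
End BelowAnnotations.

Section ChainInvariant.
Variable F : finType.
Local Notation term := (Defs.term F).
Variable ar : F -> nat.
Variables P Q : set (adp F).
(* Trees rewrite with Q, which agrees with P up to dropped flags, while the
   invariant refers to the usable rules of P. *)
Hypothesis Pwf : forall a, P a -> adp_wf ar a.
Hypothesis QP : sub_unflagged Q P.
Hypothesis PQ : lhs_sub P Q.
Local Notation inv := (below_annot (NF_or_usable P) false).

Lemma redex_shape a sg (v : term) : P a -> flat v = subst sg (lhs a) ->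
  exists g ts b vs, [/\ lhs a = Fn g false ts, v = Fn g b vs & ~ NF P v].
Proof.
move=> Pa Hflat; have [[g [ts Hl]] _ _ _ _] := Pwf Pa.
have nNF : ~ NF P v by move=> HN; apply: (HN [::] v) => //; exists a, sg.
move: Hflat nNF; rewrite Hl; case: v => [x|g' b vs] //= [-> _] nNF.
by exists g, ts, b, vs.
Qed.

Lemma unmark_above_nonusable s p v sg a w : inv s -> subterm_at s p = Some v ->
  flat v = subst sg (lhs a) -> P a -> flag a -> ~ UR P a ->
  unmark_above (replace s p w) p = replace s p w.
Proof.
move=> Hs Hsub Hflat Pa Hf nUR.
have [g [ts [b [vs [Hl Ev nNF]]]]] := redex_shape Pa Hflat; rewrite Ev in Hsub nNF.
apply: (proj2 (unmark_above_replace_id w Hs Hsub _)) => -[//|Hu]; apply: nUR.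
by apply: Hu; split=> //; split=> //; rewrite Hl.
Qed.

Lemma step_inv s st pr : inv s -> step_ok Q s st ->
  List.In pr (rhs (st_adp st)) -> inv (step_term s st pr.2).
Proof.
case: st => p rho sg; case: pr => q r Hs [/= Qrho [v [Hsub [Hflat Hinner]]]] /= Hr.
have [a Pa [El Er Ea]] := sub_unflagged_origin QP Qrho.
have [g [ts [b [vs [Hl Ev nNF]]]]] : exists g ts b vs,
    [/\ lhs a = Fn g false ts, v = Fn g b vs & ~ NF P v].
  by apply: (@redex_shape a sg v Pa); rewrite El.
have Har : List.In (q, r) (rhs a) by rewrite Er.
have Hsg x : x \in tvars r -> NF P (sg x).
  have [_ _ _ /(_ _ _ Har) [_ _ _ Hvars] _] := Pwf Pa.
  move=> /Hvars; rewrite Hl; apply: subst_var_NF => pi w Hpi Hw.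
  by apply: NF_lhs_sub PQ _; apply: Hinner Hpi _; rewrite -El Hl.
set r' := if annot_at s p then r else flat r.
have r'_usable : below_annot (usable_head P) false r'.
  rewrite /r'; case: ifP => _; last exact: below_annot_flat.
  exact: (below_annot_rhs Pa Har (pi := [::])).
have Hsg' x : x \in tvars r' -> NF P (sg x).
  by rewrite /r'; case: ifP => _; rewrite ?tvars_flat; apply: Hsg.
rewrite /step_term /=; case Hf: (flag rho); last first.
  by apply: (below_annot_unmark_replace Hs Hsub nNF); apply: below_annot_subst.
apply: (below_annot_replace Hs Hsub nNF) => -[] Hv; last exact: below_annot_subst.
have URrho : UR P rho.
  move: Hv; rewrite Ev => -[/(_ isT) [HN|Hu] _]; first by rewrite -Ev in HN.
  apply: Hu; by rewrite -(Ea Hf); split=> //; split; [rewrite (Ea Hf) | rewrite Hl].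
apply: below_annot_subst => //; apply: below_annot_syms => h.
by rewrite /r'; case: ifP; rewrite ?syms_flat => _ /(usable_root_UR_rhs URrho Hr).
Qed.

Lemma no_defined_NF (u : term) : no_defined Q u -> NF P u.
Proof.
move=> Hu pi w Hw [a [sg [Pa Ha]]]; have [[g [ts Hl]] _ _ _ _] := Pwf Pa.
move: (no_defined_subterm Hu Hw) Ha; rewrite Hl; case: w {Hw} => [x|g' b ws] //= [nd _] [Eg _].
by apply: nd; apply: defined_lhs_sub PQ _; exists a; split=> //; exists false, ts; rewrite Hl Eg.
Qed.

Lemma chain_tree_inv T t : chain_tree Q T -> ct_lab T [::] = sharp t -> basic ar Q t ->
  forall v, ct_node T v -> inv (ct_lab T v).
Proof.
move=> [_ _ Hpref Hstep] Hroot [_ [_ [f [ts [Et [_ Hts]]]]]] v.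
elim/last_ind: v => [|v i IH] Hn.
  rewrite Hroot Et /=; split=> //; apply/foldr_andP => u /Hts /no_defined_NF.
  exact: below_annot_NF.
have Hv := Hpref v i Hn; move: (Hstep v Hv); case: (ct_step T v) => [st|/(_ i Hn) //].
move=> [Hok [Hchild Hres]]; have Hi := proj1 (Hchild i) Hn; have [_ ->] := Hres i Hi.
move: Hi; rewrite size_map => Hi; rewrite (nth_map (0%R, ct_lab T v)) //=.
exact: step_inv (IH Hv) Hok (nth_In _ Hi).
Qed.

End ChainInvariant.

Section Relabel.
Variable F : finType.
Implicit Types (P Q S : set (adp F)) (m : adp F -> adp F).

Definition relabel_step m (st : step F) := Step (st_pos st) (m (st_adp st)) (st_sub st).

Definition relabel m (T : ctree F) :=
  CTree (ct_node T) (ct_prob T) (ct_lab T) (fun v => omap (relabel_step m) (ct_step T v)).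

Lemma chain_tree_relabel P Q m T : chain_tree P T ->
  (forall v st, ct_node T v -> ct_step T v = Some st -> step_ok P (ct_lab T v) st ->
     step_ok Q (ct_lab T v) (relabel_step m st) /\
     step_result (ct_lab T v) (relabel_step m st) = step_result (ct_lab T v) st) ->
  chain_tree Q (relabel m T).
Proof.
move=> [H1 H2 H3 H4] Hm; split => // v Hv /=.
have := H4 v Hv; case E: (ct_step T v) => [st|] //= [Hok Hrest].
by have [Hok' ->] := Hm v st Hv E Hok.
Qed.

Lemma edl_relabel S1 S2 m T : (forall a, S1 a -> S2 (m a)) -> (edl S1 T <= edl S2 (relabel m T))%E.
Proof.
move=> Hm; apply: ereal_sup_le => y [A [finA subA] <-]; exists A => //; split => // x /subA.
move=> [Hx [st [E [HS Ha]]]]; split => //.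
by exists (relabel_step m st); rewrite /= E; split=> //; split=> //; apply: Hm.
Qed.

Definition harmless_reflag P Q Q' m := forall b, Q b ->
  [/\ Q' (m b), m b = setflag b (flag (m b)) &
       flag (m b) != flag b -> exists a, [/\ P a, flag a, ~ UR P a & lhs a = lhs b]].

Variable ar : F -> nat.
Variables P Q Q' : set (adp F).
Variable m : adp F -> adp F.
Hypothesis Pwf : forall a, P a -> adp_wf ar a.
Hypothesis QP : sub_unflagged Q P.
Hypothesis PQ : lhs_sub P Q.
Hypothesis Q'Q : lhs_sub Q' Q.
Hypothesis m_reflag : harmless_reflag P Q Q' m.

Lemma chain_tree_reflag T t : chain_tree Q T -> ct_lab T [::] = sharp t -> basic ar Q t ->
  chain_tree Q' (relabel m T).
Proof.
move=> HT Hroot Ht; have Hinv := chain_tree_inv Pwf QP PQ HT Hroot Ht.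
apply: chain_tree_relabel HT _ => v [p b sg] Hv _ /=.
move=> [Qb [w [Hsub [Hflat Hinner]]]]; have [Q'mb Emb Hflag] := m_reflag Qb.
have El : lhs (m b) = lhs b by rewrite Emb.
have Er : rhs (m b) = rhs b by rewrite Emb.
split.
  split=> //; exists w; split=> //; rewrite El; split=> // pi u Hpi Hu.
  exact: NF_lhs_sub Q'Q (Hinner pi u Hpi Hu).
rewrite /step_result /= Er; apply: eq_map => -[q r] /=; congr (_, _).
rewrite /step_term /=; have [->//|/Hflag [a [Pa Ha nUR Ela]]] := eqVneq (flag (m b)) (flag b).
rewrite -Ela in Hflat.
have Hw w' := unmark_above_nonusable Pwf w' (Hinv v Hv) Hsub Hflat Pa Ha nUR.
by case: (flag b); case: (flag (m b)); rewrite ?Hw.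
Qed.

End Relabel.

Section Complexities.

Lemma leC_trans c d e : leC c d -> leC d e -> leC c e.
Proof.
by case: c => [x| | | |]; case: d => [y| | | |]; case: e => [z| | | |]; rewrite /leC /=; lia.
Qed.

Lemma leC_maxl c d : leC c (Defs.maxC c d).
Proof. by case: c => [x| | | |]; case: d => [y| | | |]; rewrite /leC /=; lia. Qed.

Lemma leC_maxr c d : leC d (Defs.maxC c d).
Proof. by case: c => [x| | | |]; case: d => [y| | | |]; rewrite /leC /=; lia. Qed.

Definition non_polyC (b1 b2 b3 : bool) : cplx :=
  if b1 then CExp else if b2 then CExp2 else if b3 then CFin else COmega.

Lemma leC_Pol_non_polyC a b1 b2 b3 : leC (Pol a) (non_polyC b1 b2 b3).
Proof. by case: b1; case: b2; case: b3; rewrite /leC /=; lia. Qed.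

Lemma leC_non_polyC (a1 a2 a3 b1 b2 b3 : bool) : (b1 -> a1) -> (b2 -> a2) -> (b3 -> a3) ->
  leC (non_polyC a1 a2 a3) (non_polyC b1 b2 b3).
Proof.
by case: a1; case: a2; case: a3; case: b1; case: b2; case: b3 => //= H1 H2 H3;
  rewrite /leC /=; lia || (exfalso; by [case: H1 | case: H2 | case: H3]).
Qed.

Local Open Scope ereal_scope.

Lemma bigO_le (f g : nat -> \bar R) h : (forall n, f n <= g n) -> Defs.bigO g h -> Defs.bigO f h.
Proof. by move=> Hfg [c [N H]]; exists c, N => n Hn; apply: le_trans (Hfg n) (H n Hn). Qed.

Lemma iota_c_le (f g : nat -> \bar R) : (forall n, f n <= g n) -> leC (iota_c f) (iota_c g).
Proof.
move=> Hfg; have Og := bigO_le Hfg; rewrite /iota_c.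
case: pselect => [Hf|nf]; case: pselect => [Hg|ng].
- case: ex_minnP => m _ minm; case: ex_minnP => m' /asboolP Hm' _.
  by right; split=> //=; apply/minm/asboolP/Og.
- exact: (leC_Pol_non_polyC _ `[< _ >] `[< _ >] `[< _ >]).
- by case: nf; case: Hg => a /Og Ha; exists a.
- have le_non_poly := leC_non_polyC; rewrite /non_polyC in le_non_poly.
  apply: le_non_poly => /asboolP H; apply/asboolP.
  + by case: H => k /Og; exists k.
  + by case: H => k /Og; exists k.
  + move=> n; apply: contra_neq (H n) => Efn.
    by apply/eqP; rewrite -leye_eq -Efn; apply: Hfg.
Qed.

End Complexities.

Lemma occurs_wf (F : finType) (ar : F -> nat) T pre0 pre A :
  occurs pre0 T pre A -> proof_tree ar T -> well_formed_from ar pre0 T ->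
  problem_ok ar A /\ leC (iotaPS ar A.1 (A.1 `\` A.2)) pre.
Proof.
elim=> {pre0 T pre A} [pre A C ch [Hok _] [_ [Hle _]] //|].
move=> pre A C ch c pre' B Hc _ IH [_ [_ /foldr_andP Hch]] [_ [_ /foldr_andP Hwf]].
exact: IH (Hch c Hc) (Hwf c Hc).
Qed.

Lemma iotaPS_relabel (F : finType) (ar : F -> nat) (P1 S1 P2 S2 : set (adp F)) m :
  (forall t, basic ar P1 t -> basic ar P2 t) ->
  (forall T t, chain_tree P1 T -> ct_lab T [::] = sharp t -> basic ar P1 t ->
     chain_tree P2 (relabel m T)) ->
  (forall a, S1 a -> S2 (m a)) -> leC (iotaPS ar P1 S1) (iotaPS ar P2 S2).
Proof.
move=> Hbasic Htree HS; apply: iota_c_le => n; apply: ge_ereal_sup => y [t [Ht Hn] <-].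
apply: (@le_trans _ _ (edh P2 S2 t)).
  apply: ge_ereal_sup => z [T [HT Hroot] <-]; apply: le_trans (edl_relabel T HS) _.
  by apply: ereal_sup_ubound; exists (relabel m T) => //; split=> //; apply: Htree HT Hroot Ht.
by apply: ereal_sup_ubound; exists t => //; split=> //; apply: Hbasic.
Qed.

Section ProcURSound.
Variable F : finType.
Variable ar : F -> nat.
Variables P S : set (adp F).
Hypothesis Pwf : forall a, P a -> adp_wf ar a.

Let P' := UR P `|` [set setflag a false | a in P `\` UR P].
Let S' := (S `&` UR P) `|` [set setflag a false | a in S `\` UR P].

Definition unflag_nonusable a := if `[< UR P a >] then a else setflag a false.

Definition restore_flag b := if `[< P b >] then b else setflag b true.

Lemma sub_unflagged_P' : sub_unflagged P' P.
Proof.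
move=> b [/UR_subset|[a [Pa _] <-]]; first by left.
by case: a Pa => l r [] Pa; [right | left].
Qed.

Lemma lhs_sub_P_P' : lhs_sub P P'.
Proof.
move=> a Pa; case: (pselect (UR P a)) => U; first by exists a => //; left.
by exists (setflag a false) => //; right; exists a.
Qed.

Lemma lhs_sub_P'_P : lhs_sub P' P.
Proof. exact: sub_unflagged_lhs_sub sub_unflagged_P'. Qed.

Lemma P'_nonusable b : P' b -> ~ UR P b ->
  [/\ P (restore_flag b), ~ UR P (restore_flag b) & setflag (restore_flag b) false = b].
Proof.
case=> [//|[a [Pa nUa] <-]] _; rewrite /restore_flag; case: asboolP => [Pb|nPb].
  by split=> // /UR_flag.
by case: a Pa nUa nPb => l r [] Pa nUa // /(_ Pa).
Qed.

Lemma unflag_nonusable_harmless : harmless_reflag P P P' unflag_nonusable.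
Proof.
move=> a Pa; rewrite /unflag_nonusable; case: asboolP => U.
  by rewrite setflagK eqxx; split=> //; left.
split=> //; first by right; exists a.
by move=> Hf; exists a; split=> //; case: (flag a) Hf.
Qed.

Lemma restore_flag_harmless : harmless_reflag P P' P restore_flag.
Proof.
move=> b P'b; case: (pselect (UR P b)) => U.
  by have Pb := UR_subset U; rewrite /restore_flag asboolT // setflagK eqxx.
have [Pr nUr] := P'_nonusable P'b U; set r := restore_flag b => Eb.
rewrite -Eb setflag_setflag setflagK; split=> // Hf.
by exists r; split=> //; case: (flag r) Hf.
Qed.

Lemma iotaPS_le_reflagged : leC (iotaPS ar P S) (iotaPS ar P' S').
Proof.
apply: (iotaPS_relabel (m := unflag_nonusable)) => [t|T t|a Sa].
- exact: basic_lhs_sub lhs_sub_P_P' lhs_sub_P'_P.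
- exact: (chain_tree_reflag Pwf (@sub_unflagged_refl F P) (@lhs_sub_refl F P) lhs_sub_P'_P
    unflag_nonusable_harmless).
- rewrite /unflag_nonusable; case: asboolP => U; first by left.
  by right; exists a.
Qed.

Lemma iotaPS_complement_le_reflagged :
  leC (iotaPS ar P' (P' `\` S')) (iotaPS ar P (P `\` S)).
Proof.
apply: (iotaPS_relabel (m := restore_flag)) => [t|T t|b [P'b nS'b]].
- exact: basic_lhs_sub lhs_sub_P'_P lhs_sub_P_P'.
- exact: (chain_tree_reflag Pwf sub_unflagged_P' lhs_sub_P_P' lhs_sub_P_P' restore_flag_harmless).
- have [Pr _ _] := restore_flag_harmless P'b; split=> // Sr; apply: nS'b.
  case: (pselect (UR P b)) => U.
    by left; split=> //; move: Sr; rewrite /restore_flag asboolT //; apply: UR_subset.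
  have [_ nUr Eb] := P'_nonusable P'b U.
  by right; exists (restore_flag b).
Qed.

End ProcURSound.

Theorem mainTheorem5 (F : finType) (ar : F -> nat) : sound ar (@ProcUR F).
Proof.
move=> T pre [P S] HT Hwf Hocc.
have [[_ _ Pwf] Hpre] := occurs_wf Hocc HT Hwf.
split=> [|B [<-|//]] /=.
- apply: leC_trans (iotaPS_le_reflagged S Pwf) _.
  by apply: leC_trans (leC_maxl _ (Pol 0)) (leC_maxr _ _).
- exact: leC_trans (iotaPS_complement_le_reflagged S Pwf) (leC_trans Hpre (leC_maxl _ _)).
Qed.
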